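(* Let $a\in\mathbb{R}^n$, $\mathcal{B}\subseteq\mathbb{R}^n$, and $\mathcal{M}=\{\mathrm{Sym}(ab^\top): b\in\mathcal{B}\}$. Then for every positive semidefinite $X\in\mathbb{S}^n_+$ of rank at least two, $\mathrm{range}(X)\cap\mathcal{N}(\mathcal{M})\neq\{0\}$. In particular, $\mathcal{S}(\mathcal{M})$ is rank-one generated.
   Context: $\mathbb{S}^n$ is the space of real symmetric $n\times n$ matrices with $\langle A,B\rangle=\mathrm{tr}(AB)$; $\mathbb{S}^n_+$ is the PSD cone; $\mathrm{Sym}(M)=(M+M^\top)/2$. For $\mathcal{M}\subseteq\mathbb{S}^n$: $\mathcal{S}(\mathcal{M})=\{X\in\mathbb{S}^n_+:\langle M,X\rangle\ge0\ \forall M\in\mathcal{M}\}$ and $\mathcal{N}(\mathcal{M})=\{x\in\mathbb{R}^n: x^\top Mx=0\ \forall M\in\mathcal{M}\}$. A closed convex cone $\mathcal{S}\subseteq\mathbb{S}^n_+$ is rank-one generated (ROG) if $\mathcal{S}=\mathrm{conv}(\mathcal{S}\cap\{xx^\top:x\in\mathbb{R}^n\})$. *)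

From HB Require Import structures.
From mathcomp Require Import all_boot all_order all_algebra.
From mathcomp Require Import boolp classical_sets.
Set Implicit Arguments. Unset Strict Implicit. Unset Printing Implicit Defensive.
Import Order.TTheory GRing.Theory Num.Theory.
Local Open Scope ring_scope.
Local Open Scope classical_set_scope.

Section Defs.
Variables (R : realFieldType) (n : nat).

Definition Sym (M : 'M[R]_n) : 'M[R]_n := 2^-1 *: (M + M^T).

Definition inner (A B : 'M[R]_n) : R := \tr (A *m B).

Definition qform (M : 'M[R]_n) (x : 'cV[R]_n) : R := (x^T *m M *m x) 0 0.

Definition psd (X : 'M[R]_n) : Prop :=
  X^T = X /\ forall x : 'cV[R]_n, 0 <= qform X x.

Definition Sset (M : set 'M[R]_n) : set 'M[R]_n :=
  [set X | psd X /\ forall A, M A -> 0 <= inner A X].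

Definition Nset (M : set 'M[R]_n) : set 'cV[R]_n :=
  [set x | forall A, M A -> qform A x = 0].

Definition colspan (X : 'M[R]_n) : set 'cV[R]_n :=
  [set x | exists y : 'cV[R]_n, x = X *m y].

Definition conv (S : set 'M[R]_n) : set 'M[R]_n :=
  [set X | exists (k : nat) (lam : 'I_k -> R) (P : 'I_k -> 'M[R]_n),
      (forall i, 0 <= lam i) /\ \sum_(i < k) lam i = 1 /\
      (forall i, S (P i)) /\ X = \sum_(i < k) lam i *: P i].

Definition rank_one_set : set 'M[R]_n :=
  [set X | exists x : 'cV[R]_n, X = x *m x^T].

Definition ROG (S : set 'M[R]_n) : Prop := S = conv (S `&` rank_one_set).

Definition Mset (a : 'cV[R]_n) (B : set 'cV[R]_n) : set 'M[R]_n :=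
  [set A | exists2 b, B b & A = Sym (a *m b^T)].

End Defs.

(* If range X meets N(M) only in 0, then X y = 0 whenever a^T X y = 0, since
   x^T Sym(a b^T) x = (a^T x)(b^T x); so the row space of X lies in that of the
   single row a^T X and rank X <= 1.
   For rank-one generation, symmetric Gaussian elimination peels dyads off a PSD
   matrix: X = c^-1 (X e)(X e)^T + X' with c = e^T X e > 0, X' PSD, X' e = 0 and
   rank X' < rank X.  Pivoting first on e = a splits off a dyad v v^T with
   (a^T v)(b^T v) = (a^T X a)(b^T X a) >= 0, and the remainder annihilates a, so
   all its dyads v v^T have a^T v = 0 and lie in S(M).  Normalizing the weights,
   with the dyad 0 absorbing the slack, yields a convex combination. *)

From HB Require Import structures.
From mathcomp Require Import all_boot all_order all_algebra.
From mathcomp Require Import boolp classical_sets.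
From mathcomp Require Import ring lra.
Import Order.TTheory GRing.Theory Num.Theory.
Local Open Scope ring_scope.
Local Open Scope classical_set_scope.
Set Implicit Arguments. Unset Strict Implicit. Unset Printing Implicit Defensive.

Lemma linear_coef_eq0 (R : realFieldType) (p q : R) :
  0 <= q -> (forall t, 0 <= 2 * t * p + t ^+ 2 * q) -> p = 0.
Proof.
move=> q_ge0 nonneg; pose t := - p / (q + 1).
have tq : t * (q + 1) = - p by rewrite /t mulfVK // gt_eqF // ltr_wpDl.
have := nonneg t => ineq; apply/eqP; rewrite -sqrf_eq0 eq_le sqr_ge0 andbT; nra.
Qed.

Section PsdDyads.
Variables (R : realFieldType) (n : nat).
Implicit Types (u v w x : 'cV[R]_n) (A Y : 'M[R]_n).

Definition dot u w : R := (u^T *m w) 0 0.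

Lemma dotE u w : dot u w = \sum_i u i 0 * w i 0.
Proof. by rewrite /dot !mxE; apply: eq_bigr => i _; rewrite mxE. Qed.

Lemma dotC u w : dot u w = dot w u.
Proof. by rewrite /dot -[u^T *m w]trmxK trmx_mul trmxK mxE. Qed.

Lemma dotDr u w1 w2 : dot u (w1 + w2) = dot u w1 + dot u w2.
Proof. by rewrite /dot mulmxDr mxE. Qed.

Lemma dotBr u w1 w2 : dot u (w1 - w2) = dot u w1 - dot u w2.
Proof. by rewrite /dot mulmxBr !mxE. Qed.

Lemma dotZr u c w : dot u (c *: w) = c * dot u w.
Proof. by rewrite /dot -scalemxAr mxE. Qed.

Lemma dot0r u : dot u 0 = 0.
Proof. by rewrite /dot mulmx0 mxE. Qed.

Lemma dotBl u1 u2 w : dot (u1 - u2) w = dot u1 w - dot u2 w.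
Proof. by rewrite dotC dotBr !(dotC w). Qed.

Lemma dotZl c u w : dot (c *: u) w = c * dot u w.
Proof. by rewrite dotC dotZr dotC. Qed.

Lemma dotDl u1 u2 w : dot (u1 + u2) w = dot u1 w + dot u2 w.
Proof. by rewrite dotC dotDr !(dotC w). Qed.

Lemma dot0l w : dot 0 w = 0.
Proof. by rewrite dotC dot0r. Qed.

Lemma dot_mulmx u A w : dot u (A *m w) = dot (A^T *m u) w.
Proof. by rewrite /dot trmx_mul trmxK mulmxA. Qed.

Lemma dot_sym Y u w : Y^T = Y -> dot u (Y *m w) = dot (Y *m u) w.
Proof. by move=> Ysym; rewrite dot_mulmx Ysym. Qed.

Lemma dotxx_eq0 u : dot u u = 0 -> u = 0.
Proof.
have sq_ge0 i : 0 <= u i 0 * u i 0 by rewrite -expr2 sqr_ge0.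
rewrite dotE => /psumr_eq0P u0; apply/matrixP => i j; rewrite ord1 mxE.
by have /eqP := u0 (fun i _ => sq_ge0 i) i isT; rewrite mulf_eq0 orbb => /eqP.
Qed.

Lemma qformE A x : qform A x = dot x (A *m x).
Proof. by rewrite /qform /dot mulmxA. Qed.

Lemma rank_one_mulmx u w x : (u *m w^T) *m x = dot w x *: u.
Proof. by rewrite -mulmxA [w^T *m x]mx11_scalar mul_mx_scalar. Qed.

Lemma mulmx_eq0_col m p (A : 'M[R]_(m, n)) (C : 'M[R]_(n, p)) :
  (forall j, A *m col j C = 0) -> A *m C = 0.
Proof.
move=> AC0; apply/matrixP => i j.
by have := congr1 (fun v : 'cV_m => v i 0) (AC0 j); rewrite colE mulmxA -colE !mxE.
Qed.

Lemma psd_qform_eq0 Y e : psd Y -> qform Y e = 0 -> Y *m e = 0.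
Proof.
move=> [Ysym Yq] qe0; apply: dotxx_eq0.
(* q(e + t Ye) = 2 t |Ye|^2 + t^2 q(Ye) is nonnegative for every t. *)
apply: (@linear_coef_eq0 _ _ (qform Y (Y *m e))) => // t.
have := Yq (e + t *: (Y *m e)).
rewrite qformE mulmxDr -scalemxAr !(dotDl, dotDr, dotZl, dotZr) -!qformE qe0.
rewrite [dot e _]dot_sym //; lra.
Qed.

Lemma psd_qform_gt0 Y : psd Y -> Y != 0 -> exists e, 0 < qform Y e.
Proof.
move=> psdY /eqP Yn0; apply: contrapT => no_pos; apply: Yn0.
rewrite -[Y]mulmx1; apply: mulmx_eq0_col => j; apply: psd_qform_eq0 => //.
apply/eqP; rewrite eq_le psdY.2 andbT leNgt; apply/negP => pos.
by apply: no_pos; exists (col j 1%:M).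
Qed.

Lemma psd_dyad v : psd (v *m v^T).
Proof.
split; first by rewrite trmx_mul trmxK.
by move=> x; rewrite qformE rank_one_mulmx dotZr dotC -expr2 sqr_ge0.
Qed.

Definition pivot Y e := Y - (qform Y e)^-1 *: (Y *m e *m (Y *m e)^T).

Lemma pivotE Y e : Y = (qform Y e)^-1 *: (Y *m e *m (Y *m e)^T) + pivot Y e.
Proof. by rewrite addrC subrK. Qed.

Lemma pivot_mulmx Y e x :
  pivot Y e *m x = Y *m (x - (dot (Y *m e) x / qform Y e) *: e).
Proof.
by rewrite mulmxBl -scalemxAl rank_one_mulmx mulmxBr -scalemxAr scalerA mulrC.
Qed.

Lemma colspan_pivot Y e : colspan (pivot Y e) `<=` colspan Y.
Proof. by move=> _ [x ->]; rewrite pivot_mulmx; eexists. Qed.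

Section Pivot.
Variables (Y : 'M[R]_n) (e : 'cV[R]_n).
Hypotheses (psdY : psd Y) (qe_gt0 : 0 < qform Y e).

Lemma pivot_mulmx_eq0 : pivot Y e *m e = 0.
Proof.
by rewrite pivot_mulmx dotC -qformE divff ?gt_eqF // scale1r subrr mulmx0.
Qed.

Lemma pivot_sym : (pivot Y e)^T = pivot Y e.
Proof. by rewrite linearB linearZ /= trmx_mul trmxK psdY.1. Qed.

Lemma qform_pivot x :
  qform (pivot Y e) x = qform Y (x - (dot (Y *m e) x / qform Y e) *: e).
Proof.
rewrite [RHS]qformE -pivot_mulmx qformE dotBl dotZl [dot e _]dot_mulmx pivot_sym.
by rewrite pivot_mulmx_eq0 dot0l mulr0 subr0.
Qed.

Lemma psd_pivot : psd (pivot Y e).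
Proof. by split=> [|x]; rewrite ?pivot_sym // qform_pivot psdY.2. Qed.

Lemma rank_pivot : (\rank (pivot Y e) < \rank Y)%N.
Proof.
apply: rank_ltmx; rewrite ltmxE; apply/andP; split.
  have eY : e^T *m Y = (Y *m e)^T by rewrite trmx_mul psdY.1.
  have -> : pivot Y e = (1%:M - (qform Y e)^-1 *: (Y *m e *m e^T)) *m Y.
    by rewrite mulmxBl mul1mx -scalemxAl -[_ *m e^T *m Y]mulmxA eY.
  exact: submxMl.
apply/negP => /submxP [D YD]; move: qe_gt0.
by rewrite qformE YD -mulmxA pivot_mulmx_eq0 mulmx0 dot0r ltxx.
Qed.

End Pivot.

Definition dyad_cone (S : set 'cV[R]_n) (X : 'M[R]_n) :=
  exists2 s : seq (R * 'cV[R]_n), (forall p, p \in s -> 0 <= p.1 /\ S p.2)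
    & X = \sum_(p <- s) p.1 *: (p.2 *m p.2^T).

Lemma dyad_cone0 S : dyad_cone S 0.
Proof. by exists [::]; rewrite ?big_nil. Qed.

Lemma dyad_cone_cons S c v X : 0 <= c -> S v -> dyad_cone S X ->
  dyad_cone S (c *: (v *m v^T) + X).
Proof.
move=> c_ge0 Sv [s sS ->]; exists ((c, v) :: s); last by rewrite big_cons.
by move=> p; rewrite inE => /predU1P [-> //|]; apply: sS.
Qed.

Lemma dyad_cone_sub S S' X : S `<=` S' -> dyad_cone S X -> dyad_cone S' X.
Proof. by move=> SS' [s sS ->]; exists s => // p /sS [? /SS']. Qed.

Lemma psd_dyad_cone Y : psd Y -> dyad_cone (colspan Y) Y.
Proof.
move: {2}(\rank Y) (leqnn (\rank Y)) => r; elim: r Y => [|r IH] Y rY psdY.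
  by move: rY; rewrite leqn0 mxrank_eq0 => /eqP ->; apply: dyad_cone0.
have [->|Yn0] := eqVneq Y 0; first exact: dyad_cone0.
have [e qe_gt0] := psd_qform_gt0 psdY Yn0.
rewrite [X in dyad_cone _ X](pivotE Y e); apply: dyad_cone_cons.
- by rewrite invr_ge0 ltW.
- by exists e.
apply: (dyad_cone_sub (@colspan_pivot Y e)); apply: IH (psd_pivot psdY qe_gt0).
by rewrite -ltnS (leq_trans (rank_pivot psdY qe_gt0)).
Qed.

Lemma psd_dyad_cone_orth a Y : psd Y -> Y *m a = 0 ->
  dyad_cone [set v | dot a v = 0] Y.
Proof.
move=> psdY Ya; apply: dyad_cone_sub (psd_dyad_cone psdY) => _ [y ->].
by rewrite /= dot_sym ?psdY.1 // Ya dot0l.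
Qed.

Lemma inner_dyad A v : inner A (v *m v^T) = qform A v.
Proof. by rewrite /inner mulmxA mxtrace_mulC mulmxA /mxtrace big_ord1. Qed.

Lemma qform_Sym a b x : qform (Sym (a *m b^T)) x = dot a x * dot b x.
Proof.
rewrite qformE /Sym -scalemxAl trmx_mul trmxK mulmxDl !rank_one_mulmx.
by rewrite dotZr dotDr !dotZr !(dotC x); field.
Qed.

Lemma inner_Sym a b Z : Z^T = Z -> inner (Sym (a *m b^T)) Z = dot b (Z *m a).
Proof.
move=> Zsym; rewrite /inner /Sym -scalemxAl mxtraceZ trmx_mul trmxK mulmxDl.
rewrite mxtraceD -!mulmxA (mxtrace_mulC a) (mxtrace_mulC b) /mxtrace !big_ord1.
by rewrite -!mulmxA -/(dot b (Z *m a)) -/(dot a (Z *m b)) dot_sym // dotC; field.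
Qed.

Lemma conv_seq (S : set 'M[R]_n) (s : seq (R * 'M[R]_n)) :
  (forall p, p \in s -> 0 <= p.1 /\ S p.2) -> \sum_(p <- s) p.1 = 1 ->
  conv S (\sum_(p <- s) p.1 *: p.2).
Proof.
move=> sS sum1; pose p_ (i : 'I_(size s)) := nth (0, 0) s i.
have sSi i : 0 <= (p_ i).1 /\ S (p_ i).2 by apply/sS/mem_nth.
exists (size s), (fun i => (p_ i).1), (fun i => (p_ i).2).
by rewrite -sum1 !(big_nth (0, 0)) !big_mkord; do ![split] => // i; case: (sSi i).
Qed.

Section Sset.
Variable M : set 'M[R]_n.

Lemma Sset0 : Sset M 0.
Proof.
split; first split=> [|x]; first by rewrite trmx0.
  by rewrite qformE mul0mx dot0r.
by move=> A _; rewrite /inner mulmx0 mxtrace0.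
Qed.

Lemma SsetD X1 X2 : Sset M X1 -> Sset M X2 -> Sset M (X1 + X2).
Proof.
move=> [[sym1 q1] in1] [[sym2 q2] in2]; split; first split.
- by rewrite linearD /= sym1 sym2.
- by move=> x; rewrite qformE mulmxDl dotDr -!qformE addr_ge0.
- by move=> A MA; rewrite /inner mulmxDr mxtraceD addr_ge0 ?in1 ?in2.
Qed.

Lemma SsetZ c X : 0 <= c -> Sset M X -> Sset M (c *: X).
Proof.
move=> c_ge0 [[sym q] inn]; split; first split.
- by rewrite linearZ /= sym.
- by move=> x; rewrite qformE -scalemxAl dotZr -qformE mulr_ge0.
- by move=> A MA; rewrite /inner -scalemxAr mxtraceZ mulr_ge0 ?inn.
Qed.

Lemma conv_Sset : conv (Sset M `&` @rank_one_set R n) `<=` Sset M.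
Proof.
move=> _ [k [lam [P [lam_ge0 [_ [SP ->]]]]]].
apply: (big_ind (Sset M)); [exact: Sset0 | exact: SsetD |].
by move=> i _; apply: SsetZ => //; case: (SP i).
Qed.

Lemma dyad_cone_conv X : dyad_cone [set v | Sset M (v *m v^T)] X ->
  conv (Sset M `&` @rank_one_set R n) X.
Proof.
move=> [s sS ->]; set sigma := \sum_(p <- s) p.1.
have sigma_ge0 : 0 <= sigma by rewrite /sigma big_seq; apply: sumr_ge0 => p /sS[].
(* A square weight, so that T v v^T is again a dyad without square roots. *)
pose T := (sigma + 1) ^+ 2.
have T_gt0 : 0 < T by rewrite exprn_gt0 // ltr_wpDl.
have dyadT v : T *: (v *m v^T) = ((sigma + 1) *: v) *m ((sigma + 1) *: v)^T.
  by rewrite linearZ /= -scalemxAl -scalemxAr scalerA.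
pose s' := (1 - sigma / T, 0) :: [seq (p.1 / T, T *: (p.2 *m p.2^T)) | p <- s].
have -> : \sum_(p <- s) p.1 *: (p.2 *m p.2^T) = \sum_(p <- s') p.1 *: p.2.
  rewrite big_cons scaler0 add0r big_map; apply: eq_bigr => p _.
  by rewrite scalerA divfK ?gt_eqF.
apply: conv_seq.
  move=> _ /predU1P [-> | /mapP [p /sS [p1_ge0 Sp2] ->]] /=.
    split; last by split; [exact: Sset0 | exists 0; rewrite mul0mx].
    by rewrite subr_ge0 ler_pdivrMr // mul1r /T; nra.
  split; first by rewrite divr_ge0 // ltW.
  by split; [apply: SsetZ; rewrite // ltW | rewrite dyadT; eexists].
by rewrite big_cons big_map -mulr_suml subrK.
Qed.

End Sset.

Section Mset.
Variables (a : 'cV[R]_n) (B : set 'cV[R]_n).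

Lemma colspan_meet_Nset_neq0 X :
  (2 <= \rank X)%N -> colspan X `&` Nset (Mset a B) <> [set 0].
Proof.
move=> rX meet0.
have ker_sub (y : 'cV_n) : a^T *m X *m y = 0 -> X *m y = 0.
  move=> aXy; have : [set 0] (X *m y); last by [].
  rewrite -meet0; split; first by exists y.
  move=> _ [b _ ->]; rewrite qform_Sym.
  by rewrite /dot mulmxA aXy mxE mul0r.
have : (X <= a^T *m X)%MS.
  rewrite submxE; apply/eqP/mulmx_eq0_col => j; apply: ker_sub.
  by rewrite colE mulmxA mulmx_coker mul0mx.
by move/mxrankS/(leq_trans rX)/leq_trans/(_ (rank_leq_row _)).
Qed.

Lemma Sset_dyad v : (forall b, B b -> 0 <= dot a v * dot b v) ->
  Sset (Mset a B) (v *m v^T).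
Proof.
move=> av_bv_ge0; split=> [|_ [b Bb ->]]; first exact: psd_dyad.
by rewrite inner_dyad qform_Sym av_bv_ge0.
Qed.

Lemma Sset_dyad_cone X : Sset (Mset a B) X ->
  dyad_cone [set v | Sset (Mset a B) (v *m v^T)] X.
Proof.
move=> [psdX innerX].
have orth Y : psd Y -> Y *m a = 0 -> dyad_cone [set v | Sset (Mset a B) (v *m v^T)] Y.
  move=> psdY Ya; apply: dyad_cone_sub (psd_dyad_cone_orth psdY Ya) => v /= av0.
  by apply: Sset_dyad => b _; rewrite av0 mul0r.
have [qa_gt0|qa_le0] := ltP 0 (qform X a); last first.
  apply: (orth _ psdX (psd_qform_eq0 psdX _)); apply/eqP.
  by rewrite eq_le qa_le0 psdX.2.
rewrite (pivotE X a); apply: dyad_cone_cons.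
- by rewrite invr_ge0 ltW.
- apply: Sset_dyad => b Bb; apply: mulr_ge0; first by rewrite -qformE ltW.
  by rewrite -inner_Sym ?psdX.1 //; apply: innerX; exists b.
- exact: orth _ (psd_pivot psdX qa_gt0) (pivot_mulmx_eq0 qa_gt0).
Qed.

End Mset.

End PsdDyads.

Theorem theorem3p4 (R : realFieldType) (n : nat) (a : 'cV[R]_n)
    (B : set 'cV[R]_n) :
  (forall X : 'M[R]_n, psd X -> (2 <= \rank X)%N ->
     colspan X `&` Nset (Mset a B) <> [set 0]) /\
  ROG (Sset (Mset a B)).
Proof.
split=> [X _|]; first exact: colspan_meet_Nset_neq0.
apply/seteqP; split=> X; last exact: conv_Sset.
by move/Sset_dyad_cone/dyad_cone_conv.
Qed.
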